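(* Let $S$ be a (Hausdorff) topological semigroup such that $S\times S$ is countably compact, and let $\lambda$ be an infinite cardinal. Then $S$ does not contain a subsemigroup isomorphic to the semigroup $B_\lambda$ of $\lambda\times\lambda$-matrix units.
   Context: A topological semigroup is a Hausdorff space with a continuous associative multiplication. For a nonzero cardinal $\lambda$, the semigroup of $\lambda\times\lambda$-matrix units is $B_\lambda=(\lambda\times\lambda)\cup\{0\}$ with $(a,b)\cdot(c,d)=(a,d)$ if $b=c$, $(a,b)\cdot(c,d)=0$ if $b\neq c$, and $0$ a zero element. *)

From Stdlib Require Import Classical ClassicalEpsilon List.

Set Implicit Arguments.

Record Topology (X : Type) := {
  open : (X -> Prop) -> Prop;
  open_full : open (fun _ => True);
  open_inter : forall U V, open U -> open V -> open (fun x => U x /\ V x);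
  open_union : forall F : (X -> Prop) -> Prop,
      (forall U, F U -> open U) -> open (fun x => exists U, F U /\ U x)
}.

Definition hausdorff {X : Type} (T : Topology X) : Prop :=
  forall x y : X, x <> y ->
    exists U V, open T U /\ open T V /\ U x /\ V y /\ (forall z, U z -> V z -> False).

Definition prod_open {X Y : Type} (TX : Topology X) (TY : Topology Y)
  (W : X * Y -> Prop) : Prop :=
  forall p, W p -> exists U V, open TX U /\ open TY V /\ U (fst p) /\ V (snd p) /\
    (forall a b, U a -> V b -> W (a, b)).

Definition countably_compact {X : Type} (op : (X -> Prop) -> Prop) : Prop :=
  forall U : nat -> X -> Prop, (forall n, op (U n)) -> (forall x, exists n, U n x) ->
    exists N, forall x, exists n, n <= N /\ U n x.

Definition topological_semigroup {S : Type} (T : Topology S) (m : S -> S -> S) : Prop :=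
  hausdorff T /\
  (forall x y z, m x (m y z) = m (m x y) z) /\
  (forall W, open T W -> prod_open T T (fun p => W (m (fst p) (snd p)))).

(** Infinite type (a cardinal lambda is represented by a type of that cardinality). *)
Definition finite_type (L : Type) : Prop := exists l : list L, forall x, In x l.
Definition infinite_type (L : Type) : Prop := ~ finite_type L.

(** The semigroup B_L of L x L matrix units: None is the zero. *)
Definition B (L : Type) : Type := option (L * L).

Definition Bmul {L : Type} (u v : B L) : B L :=
  match u, v with
  | Some (a, b), Some (c, d) =>
      if excluded_middle_informative (b = c) then Some (a, d) else None
  | _, _ => None
  end.

(** S contains a subsemigroup isomorphic to B_L: an injective semigroup
    homomorphism B_L -> S (its image is such a subsemigroup). *)
Definition contains_Blambda {S : Type} (m : S -> S -> S) (L : Type) : Prop :=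
  exists f : B L -> S, (forall u v, f u = f v -> u = v) /\
                       (forall u v, f (Bmul u v) = m (f u) (f v)).

(* The units e_{c,i} and e_{i,c} of B_L (for a fixed index c and pairwise
   distinct indices i_0, i_1, ...) give a sequence of pairs (a_n, b_n) with
   a_n b_n = e_{c,c} and a_n b_k = 0 for n < k.  Countable compactness of S x S
   yields a cluster point (x, y) of this sequence, and continuity of the
   multiplication puts both e_{c,c} and 0 in every neighbourhood of x y, which
   is impossible in a Hausdorff space since e_{c,c} <> 0. *)
From Stdlib Require Import Classical ClassicalEpsilon List Lia.

Set Implicit Arguments.
Unset Strict Implicit.

Lemma infinite_type_not_In (L : Type) :
  infinite_type L -> forall l : list L, exists x, ~ In x l.
Proof.
  intros HL l. apply NNPP. intro Hall. apply HL. exists l. intro x.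
  apply NNPP. intro Hx. apply Hall. now exists x.
Qed.

Lemma infinite_type_injective_seq (L : Type) :
  infinite_type L -> exists g : nat -> L, forall n k, g n = g k -> n = k.
Proof.
  intro HL.
  destruct (choice _ (infinite_type_not_In HL)) as [fresh Hfresh].
  (* prefix n lists g 0, ..., g (n-1), and g n is chosen fresh for it *)
  pose (prefix := nat_rect (fun _ => list L) nil (fun _ l => fresh l :: l)).
  assert (Hprefix : forall n k, n < k -> In (fresh (prefix n)) (prefix k)).
  { intros n k; induction k as [|k IH]; intro Hnk; [lia|].
    simpl. destruct (PeanoNat.Nat.eq_dec n k) as [->|Hne]; [now left|].
    right. apply IH. lia. }
  exists (fun n => fresh (prefix n)). intros n k Heq.
  destruct (PeanoNat.Nat.lt_total n k) as [Hnk|[Hnk|Hnk]]; trivial; exfalso.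
  - apply (Hfresh (prefix k)). rewrite <- Heq. now apply Hprefix.
  - apply (Hfresh (prefix n)). rewrite Heq. now apply Hprefix.
Qed.

Lemma countably_compact_cluster_point (Z : Type) (op : (Z -> Prop) -> Prop) :
  (forall F : (Z -> Prop) -> Prop,
     (forall W, F W -> op W) -> op (fun z => exists W, F W /\ W z)) ->
  countably_compact op ->
  forall p : nat -> Z, exists q : Z,
    forall N W, op W -> W q -> exists n, N <= n /\ W (p n).
Proof.
  intros op_union Hcc p. apply NNPP. intro Hno.
  pose (avoid := fun N (W : Z -> Prop) => op W /\ forall n, N <= n -> ~ W (p n)).
  destruct (Hcc (fun N z => exists W, avoid N W /\ W z)) as [N0 HN0].
  - intro N. apply op_union. now intros W [HW _].
  - intro z. apply NNPP. intro Hz. apply Hno. exists z. intros N W HW Wz.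
    apply NNPP. intro Hfar. apply Hz. exists N, W. split; [|exact Wz].
    split; [exact HW|]. intros n Hn Wn. apply Hfar. now exists n.
  - destruct (HN0 (p N0)) as [n [HnN0 [W [[_ Hav] Wp]]]].
    exact (Hav N0 HnN0 Wp).
Qed.

Lemma prod_open_union (X Y : Type) (TX : Topology X) (TY : Topology Y)
  (F : (X * Y -> Prop) -> Prop) :
  (forall W, F W -> prod_open TX TY W) ->
  prod_open TX TY (fun p => exists W, F W /\ W p).
Proof.
  intros HF p [W [FW Wp]].
  destruct (HF W FW p Wp) as [U [V [HU [HV [Up [Vp HUV]]]]]].
  exists U, V. repeat split; trivial.
  intros a b Ua Vb. exists W. split; auto.
Qed.

Lemma prod_open_rect (X Y : Type) (TX : Topology X) (TY : Topology Y)
  (U : X -> Prop) (V : Y -> Prop) :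
  open TX U -> open TY V -> prod_open TX TY (fun p => U (fst p) /\ V (snd p)).
Proof.
  intros HU HV p [Up Vp]. exists U, V. repeat split; trivial.
Qed.

Lemma countably_compact_prod_cluster_point (X Y : Type)
  (TX : Topology X) (TY : Topology Y) :
  countably_compact (prod_open TX TY) ->
  forall (a : nat -> X) (b : nat -> Y), exists x y,
    forall N U V, open TX U -> open TY V -> U x -> V y ->
      exists n, N <= n /\ U (a n) /\ V (b n).
Proof.
  intros Hcc a b.
  destruct (countably_compact_cluster_point (prod_open_union (TX := TX) (TY := TY)) Hcc
              (fun n => (a n, b n))) as [[x y] Hq].
  exists x, y. intros N U V HU HV Ux Vy.
  exact (Hq N _ (prod_open_rect HU HV) (conj Ux Vy)).
Qed.

Lemma hausdorff_nbhs_eq (X : Type) (T : Topology X) (t u : X) :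
  hausdorff T -> (forall W, open T W -> W t -> W u) -> u = t.
Proof.
  intros Hhaus Hnbhs. apply NNPP. intro Hne.
  destruct (Hhaus t u (not_eq_sym Hne)) as [W [W' [HW [_ [Wt [W'u Hdisj]]]]]].
  exact (Hdisj u (Hnbhs W HW Wt) W'u).
Qed.

Lemma cluster_product_nbhs (X : Type) (T : Topology X) (m : X -> X -> X)
  (a b : nat -> X) (x y e z : X) :
  (forall W, open T W -> prod_open T T (fun p => W (m (fst p) (snd p)))) ->
  (forall N U V, open T U -> open T V -> U x -> V y ->
     exists n, N <= n /\ U (a n) /\ V (b n)) ->
  (forall n, m (a n) (b n) = e) ->
  (forall n k, n < k -> m (a n) (b k) = z) ->
  forall W, open T W -> W (m x y) -> W e /\ W z.
Proof.
  intros Hcont Hclu Hdiag Hupper W HW Wxy.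
  destruct (Hcont W HW (x, y) Wxy) as [U [V [HU [HV [Ux [Vy HUV]]]]]].
  destruct (Hclu 0 U V HU HV Ux Vy) as [n [_ [Uan Vbn]]].
  destruct (Hclu (S n) U V HU HV Ux Vy) as [k [Hk [_ Vbk]]].
  split.
  - rewrite <- (Hdiag n). exact (HUV _ _ Uan Vbn).
  - rewrite <- (Hupper n k Hk). exact (HUV _ _ Uan Vbk).
Qed.

Lemma Bmul_unit_match (L : Type) (i j k : L) :
  Bmul (Some (i, j)) (Some (j, k)) = Some (i, k).
Proof.
  simpl. now destruct (excluded_middle_informative (j = j)).
Qed.

Lemma Bmul_unit_mismatch (L : Type) (i j j' k : L) :
  j <> j' -> Bmul (Some (i, j)) (Some (j', k)) = None.
Proof.
  intro Hj. simpl. now destruct (excluded_middle_informative (j = j')).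
Qed.

Theorem theorem4 (S : Type) (T : Topology S) (m : S -> S -> S) :
  topological_semigroup T m ->
  countably_compact (prod_open T T) ->
  forall L : Type, infinite_type L -> ~ contains_Blambda m L.
Proof.
  intros [Hhaus [_ Hcont]] Hcc L HL [f [finj fhom]].
  destruct (infinite_type_injective_seq HL) as [g ginj].
  set (c := g 0).
  set (a := fun n => f (Some (c, g n))).
  set (b := fun n => f (Some (g n, c))).
  assert (Hdiag : forall n, m (a n) (b n) = f (Some (c, c))).
  { intro n. unfold a, b. now rewrite <- fhom, Bmul_unit_match. }
  assert (Hupper : forall n k, n < k -> m (a n) (b k) = f None).
  { intros n k Hnk. unfold a, b. rewrite <- fhom, Bmul_unit_mismatch; trivial.
    intro Heq. apply ginj in Heq. lia. }
  destruct (countably_compact_prod_cluster_point Hcc a b) as [x [y Hclu]].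
  pose proof (cluster_product_nbhs Hcont Hclu Hdiag Hupper) as Hnbhs.
  assert (Hzero : f (Some (c, c)) = f None).
  { rewrite (hausdorff_nbhs_eq Hhaus (fun W HW Wt => proj1 (Hnbhs W HW Wt))).
    exact (eq_sym (hausdorff_nbhs_eq Hhaus (fun W HW Wt => proj2 (Hnbhs W HW Wt)))). }
  apply finj in Hzero. discriminate.
Qed.
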